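(* Let $n,k$ be positive integers with $k<n/2$. For any deterministic algorithm, adaptive or non-adaptive, that uses interventions of size at most $k$ and fully orients $\vec{K}_n(\sigma)$ for every total ordering $\sigma$ of $[1:n]$ (in the learning model of the context), there exists $\sigma$ for which the set of interventions $\mathcal{I}$ it uses satisfies $\frac{n}{k}\log_{\frac{ne}{k}} n \le |\mathcal{I}|$. Moreover, there exists a family $\mathcal{I}$ of subsets of $[1:n]$, each of size at most $k$, with $|\mathcal{I}| \le (\lceil n/k \rceil - 1)\lceil \log_{\lceil n/k\rceil} n\rceil$, which fully orients $\vec{K}_n(\sigma)$ for every $\sigma$.
   Context: For a total ordering $\sigma$ of $V=[1:n]$, $\vec{K}_n(\sigma)$ is the DAG on the complete graph $K_n$ in which each edge is directed from the earlier to the later vertex in $\sigma$. Learning model: the learner maintains a partially directed graph, initially the undirected $K_n$. Performing an intervention on $I\subseteq V$: (R0) every edge with exactly one endpoint in $I$ becomes oriented as in the true DAG; then the Meek rules are applied repeatedly until nothing more can be oriented: (R1) orient $a-b$ as $a\to b$ if there is $c$ with $c\to a$ and $c,b$ non-adjacent; (R2) orient $a-b$ as $a\to b$ if there is $c$ with $a\to c$, $c\to b$; (R3) orient $a-b$ as $a\to b$ if there are $c,d$ with $a-c$, $a-d$, $c\to b$, $d\to b$, $c,d$ non-adjacent; (R4) orient $a-c$ as $a\to c$ if there are $b,d$ with $b\to c$, $a-d$, $a-b$, $d\to b$, $c,d$ non-adjacent. A non-adaptive algorithm fixes $\mathcal{I}$ in advance; an adaptive deterministic algorithm chooses $I_{m+1}$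 as a deterministic function of the partially directed graph after $I_1,\ldots,I_m$. ''Fully orients'' means that after all interventions in $\mathcal{I}$ all edges are oriented. *)

From mathcomp Require Import all_boot all_fingroup.
From Stdlib Require Import Reals.

Set Implicit Arguments.
Unset Strict Implicit.
Unset Printing Implicit Defensive.

(* Vertices are 'I_n = {0,...,n-1} (standing for [1:n]).
   A total ordering sigma is a permutation: sigma v is the position of v.
   u is earlier than v iff sigma u < sigma v. *)
Definition before (n : nat) (sigma : {perm 'I_n}) (u v : 'I_n) : bool :=
  (sigma u < sigma v)%N.

(* A partially directed graph on a fixed skeleton (adjacency relation adj)
   is represented by the set X of oriented edges: (a,b) \in X means a -> b. *)
Section Meek.
Variable n : nat.
Variable adj : rel 'I_n.
Implicit Types X : {set 'I_n * 'I_n}.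

Definition nonadj (x y : 'I_n) : bool := (x != y) && ~~ adj x y.

Definition undirected X (a b : 'I_n) : bool :=
  [&& adj a b, (a, b) \notin X & (b, a) \notin X].

Definition R1 X (a b : 'I_n) : bool :=
  undirected X a b && [exists c, ((c, a) \in X) && nonadj c b].
Definition R2 X (a b : 'I_n) : bool :=
  undirected X a b && [exists c, ((a, c) \in X) && ((c, b) \in X)].
Definition R3 X (a b : 'I_n) : bool :=
  undirected X a b &&
  [exists c, exists d, [&& undirected X a c, undirected X a d,
                          (c, b) \in X, (d, b) \in X & nonadj c d]].
Definition R4 X (a c : 'I_n) : bool :=
  undirected X a c &&
  [exists b, exists d, [&& (b, c) \in X, undirected X a d,
                          undirected X a b, (d, b) \in X & nonadj c d]].

Definition meek_step X : {set 'I_n * 'I_n} :=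
  X :|: [set p | [|| R1 X p.1 p.2, R2 X p.1 p.2, R3 X p.1 p.2 | R4 X p.1 p.2]].

(* apply the rules repeatedly until nothing more can be oriented: the chain
   X, meek_step X, ... is increasing in a finite set, hence stationary after
   at most #|'I_n * 'I_n| rounds. *)
Definition meek_closure X : {set 'I_n * 'I_n} :=
  iter #|{: 'I_n * 'I_n}| meek_step X.
End Meek.

Definition Kn_adj (n : nat) : rel 'I_n := fun x y => x != y.

Definition R0 (n : nat) (sigma : {perm 'I_n}) (I : {set 'I_n}) : {set 'I_n * 'I_n} :=
  [set p | ((p.1 \in I) != (p.2 \in I)) && before sigma p.1 p.2].

Definition intervene (n : nat) (sigma : {perm 'I_n}) (X : {set 'I_n * 'I_n})
    (I : {set 'I_n}) : {set 'I_n * 'I_n} :=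
  meek_closure (@Kn_adj n) (X :|: R0 sigma I).

Definition fully_oriented (n : nat) (X : {set 'I_n * 'I_n}) : bool :=
  [forall a : 'I_n, forall b : 'I_n, (a != b) ==> ((a, b) \in X) || ((b, a) \in X)].

Definition nonadaptive_state (n : nat) (sigma : {perm 'I_n}) (s : seq {set 'I_n})
  : {set 'I_n * 'I_n} := foldl (intervene sigma) set0 s.

(* adaptive deterministic algorithm: next intervention is a function of the
   current partially directed graph *)
Fixpoint adaptive_state (n : nat) (alg : {set 'I_n * 'I_n} -> {set 'I_n})
    (sigma : {perm 'I_n}) (m : nat) : {set 'I_n * 'I_n} :=
  match m with
  | 0 => set0
  | m'.+1 => let X := adaptive_state alg sigma m' in intervene sigma X (alg X)
  end.

Definition adaptive_used (n : nat) (alg : {set 'I_n * 'I_n} -> {set 'I_n})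
    (sigma : {perm 'I_n}) (m : nat) : seq {set 'I_n} :=
  [seq alg (adaptive_state alg sigma i) | i <- iota 0 m].

Definition lower_bound (n k : nat) : R :=
  Rmult (Rdiv (INR n) (INR k)) (Rdiv (ln (INR n)) (ln (Rdiv (Rmult (INR n) (exp 1)) (INR k)))).

Definition ceil_div (n k : nat) : nat := (n + k.-1) %/ k.

Definition upper_bound (n k : nat) : nat :=
  (ceil_div n k).-1 * up_log (ceil_div n k) n.

From Pilot Require Import Defs.
From Stdlib Require Import Reals Lra Classical.
From mathcomp Require Import all_boot all_fingroup zify.

(* On the complete graph the Meek rules R1, R3 and R4 never apply, and R2 closes
   the oriented edges under transitivity. Hence after the interventions [s] an
   edge a -> b is oriented iff some vertex between a and b in the true ordering is
   separated from a by [s] (some set of [s] contains exactly one of the two), and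
   every ordering is learned iff [s] is a separating system.

   A separating system of sets of size at most k on n points has at least
   n ln n / (k (1 + ln (n / k))) members: splitting the ground set along each set
   in turn and using the superadditivity of N H(t / N) (H the binary entropy)
   gives n ln n <= sum over I in s of n H(|I| / n) <= |s| k (1 + ln (n / k)).
   Adaptivity does not help: the adversary fixes an ordering compatible with the
   lexicographic order of the membership vectors of the vertices in the sets the
   algorithm chooses, so the run coincides with that of a fixed sequence of sets.

   Conversely, with b = ceil (n / k), the vertices whose i-th base-b digit (shifted
   by the last digit) equals d, for d = 1, ..., b - 1, form a separating system of
   sets of size at most k. *)

Set Implicit Arguments.
Unset Strict Implicit.
Unset Printing Implicit Defensive.

Section Separation.
Variable T : finType.
Implicit Types (s : seq {set T}) (V : {set T}) (a b c : T).

Definition separated s a b := has (fun I : {set T} => (a \in I) != (b \in I)) s.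

Definition separating s V :=
  forall a b, a \in V -> b \in V -> a != b -> separated s a b.

Lemma separatedxx s a : separated s a a = false.
Proof. by apply/hasP => -[I _]; rewrite eqxx. Qed.

Lemma separatedC s a b : separated s a b = separated s b a.
Proof. by apply: eq_has => I /=; rewrite eq_sym. Qed.

Lemma separated_rcons s I a b :
  separated (rcons s I) a b = separated s a b || ((a \in I) != (b \in I)).
Proof. by rewrite /separated has_rcons orbC. Qed.

Lemma separated_split s a b c :
  separated s a c -> separated s a b || separated s b c.
Proof.
case/hasP=> I sI acI; apply/orP; case: (boolP ((a \in I) != (b \in I))) => abI.
  by left; apply/hasP; exists I.
by right; apply/hasP; exists I; move: abI acI; case: (a \in I) (b \in I) (c \in I) => [] [] [].
Qed.

Lemma separating_undup s V : separating s V -> separating (undup s) V.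
Proof. by move=> sepV a b aV bV ab; rewrite /separated has_undup; apply: sepV. Qed.

Lemma separating_nil V : separating [::] V -> (#|V| <= 1)%N.
Proof.
move=> sepV; apply/card_le1_eqP => a b aV bV; apply/eqP; apply: contraT => ba.
by have := sepV b a bV aV ba.
Qed.

Lemma separating_cons s I V :
  separating (I :: s) V -> separating s (V :&: I) /\ separating s (V :\: I).
Proof.
move=> sepV; split=> a b; rewrite !inE.
  by move=> /andP[aV aI] /andP[bV bI] /(sepV a b aV bV); rewrite /= aI bI orFb.
by move=> /andP[aI aV] /andP[bI bV] /(sepV a b aV bV); rewrite /= (negbTE aI) (negbTE bI).
Qed.
End Separation.

Section Orientation.
Variable n : nat.
Implicit Types (sigma : {perm 'I_n}) (s : seq {set 'I_n}) (I : {set 'I_n}).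
Implicit Types (X : {set 'I_n * 'I_n}) (a b c : 'I_n).
Local Notation Kn := (@Kn_adj n).

Definition learned sigma s : {set 'I_n * 'I_n} :=
  [set p | before sigma p.1 p.2 &&
     [exists c, [&& sigma p.1 <= sigma c <= sigma p.2 & separated s p.1 c]]].

Lemma learned_before sigma s a b : (a, b) \in learned sigma s -> before sigma a b.
Proof. by rewrite inE => /andP[]. Qed.

Lemma learned_separated sigma s a b :
  before sigma a b -> separated s a b -> (a, b) \in learned sigma s.
Proof.
by move=> ab sab; rewrite inE ab; apply/existsP; exists b; rewrite leqnn ltnW.
Qed.

Lemma learned_trans sigma s a b c :
  (a, b) \in learned sigma s -> (b, c) \in learned sigma s -> (a, c) \in learned sigma s.
Proof.
rewrite !inE /before /= => /andP[ab /existsP[d /andP[/andP[ad db] sad]]] /andP[bc _].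
rewrite (ltn_trans ab bc); apply/existsP; exists d.
by rewrite ad sad (leq_trans db) // ltnW.
Qed.

Lemma learned_nil sigma : learned sigma [::] = set0.
Proof.
by apply/setP => p; rewrite !inE; case: before => //=; apply/existsP => -[c /andP[]].
Qed.

Lemma meek_step_Kn X : meek_step Kn X = X :|: [set p | R2 Kn X p.1 p.2].
Proof.
have nonadjF x y : nonadj Kn x y = false by rewrite /nonadj /Kn_adj andbN.
apply/setP => p; rewrite !inE /Defs.R1 /R3 /R4.
have -> : [exists c, ((c, p.1) \in X) && nonadj Kn c p.2] = false.
  by apply/existsP => -[c]; rewrite nonadjF andbF.
have -> : [exists c, exists d, [&& undirected Kn X p.1 c, undirected Kn X p.1 d,
    (c, p.2) \in X, (d, p.2) \in X & nonadj Kn c d]] = false.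
  by apply/existsP => -[c /existsP[d]]; rewrite nonadjF !andbF.
have -> : [exists b, exists d, [&& (b, p.2) \in X, undirected Kn X p.1 d,
    undirected Kn X p.1 b, (d, b) \in X & nonadj Kn p.2 d]] = false.
  by apply/existsP => -[c /existsP[d]]; rewrite nonadjF !andbF.
by rewrite !andbF /= orbF.
Qed.

Lemma learned_rcons_sub sigma s I :
  learned sigma s :|: Defs.R0 sigma I \subset learned sigma (rcons s I).
Proof.
apply/subsetP => -[a b]; rewrite inE => /orP[].
  rewrite !inE /= => /andP[-> /existsP[c /andP[acb sac]]].
  by apply/existsP; exists c; rewrite acb separated_rcons sac.
by rewrite inE /= => /andP[abI ab]; rewrite learned_separated // separated_rcons abI orbT.
Qed.

(* One round of R2 reaches the new state: if c lies between a and b and is separated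
   from a but not from b, then a -> c and c -> b are already oriented. *)
Lemma meek_step_learned sigma s I X :
  learned sigma s :|: Defs.R0 sigma I \subset X -> X \subset learned sigma (rcons s I) ->
  meek_step Kn X = learned sigma (rcons s I).
Proof.
move=> /subsetP old_sub_X /subsetP X_sub_new; apply/setP => -[a b]; rewrite meek_step_Kn in_setU inE /=.
have sepX x y : before sigma x y -> separated (rcons s I) x y -> (x, y) \in X.
  move=> xy; rewrite separated_rcons => /orP[sxy|xyI]; apply: old_sub_X; rewrite inE.
    by rewrite learned_separated.
  by rewrite inE /= inE xyI xy orbT.
apply/idP/idP => [/orP[/X_sub_new // | /andP[_ /existsP[c /andP[/X_sub_new ac /X_sub_new cb]]]]|].
  exact: learned_trans ac cb.
case: (boolP ((a, b) \in X)) => //= abX.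
rewrite inE /= => /andP[ab /existsP[c /andP[/andP[ac cb] sac]]].
have nsab : ~~ separated (rcons s I) a b by apply: contra abX; apply: sepX.
have scb : separated (rcons s I) c b.
  by move: (separated_split b sac); rewrite (negbTE nsab) separatedC.
have neq x y : separated (rcons s I) x y -> (sigma x != sigma y :> nat).
  by apply: contraTneq => /val_inj/perm_inj ->; rewrite separatedxx.
have acX : (a, c) \in X by apply: sepX => //; rewrite /before ltn_neqAle neq.
have cbX : (c, b) \in X by apply: sepX => //; rewrite /before ltn_neqAle neq.
rewrite /R2 /undirected /Kn_adj abX /=; apply/andP; split; [apply/andP; split|].
- by apply: contraTneq ab => ->; rewrite /before ltnn.
- by apply: contraL ab => /X_sub_new /learned_before; rewrite /before -leqNgt => /ltnW.
- by apply/existsP; exists c; rewrite acX cbX.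
Qed.

Lemma intervene_learned sigma s I :
  intervene sigma (learned sigma s) I = learned sigma (rcons s I).
Proof.
have [n0|n_gt0] := posnP n.
  by apply/setP => p; move: (ltn_ord p.1); rewrite [X in _ < X]n0.
have old_sub_new := learned_rcons_sub sigma s I.
rewrite /intervene /meek_closure card_prod card_ord.
have [N ->] : exists N, (n * n)%N = N.+1 by exists (n * n).-1; rewrite prednK ?muln_gt0 ?n_gt0.
elim: N => [|N IH]; first exact: meek_step_learned.
by rewrite iterS IH; apply: meek_step_learned.
Qed.

Lemma nonadaptive_stateE sigma s : nonadaptive_state sigma s = learned sigma s.
Proof.
elim/last_ind: s => [|s I IH]; first by rewrite learned_nil.
by rewrite /nonadaptive_state foldl_rcons -/(nonadaptive_state _ _) IH intervene_learned.
Qed.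

Lemma adaptive_used_S alg sigma m : adaptive_used alg sigma m.+1 =
  rcons (adaptive_used alg sigma m) (alg (adaptive_state alg sigma m)).
Proof. by rewrite /adaptive_used -addn1 iotaD map_cat cats1. Qed.

Lemma adaptive_stateE alg sigma m :
  adaptive_state alg sigma m = learned sigma (adaptive_used alg sigma m).
Proof.
elim: m => [|m IH] /=; first by rewrite learned_nil.
by rewrite adaptive_used_S -intervene_learned -IH.
Qed.

Lemma fully_oriented_learned sigma s :
  separating s [set: 'I_n] -> fully_oriented (learned sigma s).
Proof.
move=> sep_s; apply/forallP => a; apply/forallP => b; apply/implyP => ab.
have sab := sep_s a b (in_setT a) (in_setT b) ab.
case: (ltngtP (sigma a) (sigma b)) => [lt|gt|/val_inj/perm_inj eq].
- by rewrite learned_separated.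
- by rewrite orbC learned_separated // separatedC.
- by rewrite eq eqxx in ab.
Qed.

Lemma exists_perm_monotone (f : 'I_n -> nat) :
  exists sigma : {perm 'I_n}, forall u v, f u < f v -> before sigma u v.
Proof.
pose g v := f v * n + v.
have g_mono u v : f u < f v -> g u < g v.
  move=> uv; apply: (@leq_trans ((f u).+1 * n)); first by rewrite mulSnr ltn_add2l.
  by rewrite (leq_trans _ (leq_addr v _)) // leq_mul2r uv orbT.
have g_inj : injective g.
  by move=> u v /(congr1 (modn^~ n)); rewrite !modnMDl !modn_small // => /val_inj.
pose rank v := #|[set w | g w < g v]|.
have rank_lt v : rank v < n.
  by rewrite -[n in _ < n]card_ord -(cardsC [set w | g w < g v]) -addn1 leq_add2l;
     apply/card_gt0P; exists v; rewrite !inE ltnn.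
have rank_mono u v : g u < g v -> rank u < rank v.
  move=> uv; apply: proper_card; apply/properP; split.
    by apply/subsetP => w; rewrite !inE => /ltn_trans; apply.
  by exists u; rewrite !inE ?uv ?ltnn.
have rank_inj : injective (fun v => Ordinal (rank_lt v)).
  move=> u v /(congr1 val) /= ruv; apply: g_inj.
  by case: (ltngtP (g u) (g v)) => // /rank_mono; rewrite ruv ltnn.
by exists (perm rank_inj) => u v /g_mono/rank_mono; rewrite /before !permE.
Qed.

Lemma separating_of_fully_oriented s :
  (forall sigma, fully_oriented (nonadaptive_state sigma s)) -> separating s [set: 'I_n].
Proof.
move=> full a b _ _ ab.
(* In an ordering starting with a, b only R0 can orient the edge between them. *)
pose f v := if v == a then 0 else if v == b then 1 else 2.
have [sigma sigma_f] := exists_perm_monotone f.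
have before_ab : before sigma a b.
  by apply: sigma_f; rewrite /f eqxx eq_sym (negbTE ab) eqxx.
have before_b c : c != a -> c != b -> before sigma b c.
  by move=> ca cb; apply: sigma_f; rewrite /f (negbTE ca) (negbTE cb) eqxx; case: (b == a).
move: (full sigma); rewrite nonadaptive_stateE => /forallP/(_ a)/forallP/(_ b).
rewrite ab /= => /orP[|/learned_before]; last first.
  by rewrite /before ltnNge (ltnW before_ab).
rewrite inE /= => /andP[_ /existsP[c /andP[/andP[_ cb] sac]]].
have [ca|ca] := eqVneq c a; first by rewrite ca separatedxx in sac.
have [<-|cb'] := eqVneq c b; first by [].
by move: (before_b c ca cb'); rewrite /before ltnNge cb.
Qed.
End Orientation.

Lemma eqn_double_addb (x y : nat) (a b : bool) :
  (x.*2 + a == y.*2 + b) = (x == y) && (a == b).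
Proof.
apply/eqP/andP => [E|[/eqP-> /eqP->]] //.
have ab : a = b by move: (congr1 odd E); rewrite !oddD !odd_double; case: a b {E} => [] [].
by move: E; rewrite ab => /addIn/double_inj ->.
Qed.

Lemma nonincreasing_sets_stationary (T : finType) (F : nat -> {set T}) :
  (forall t t', t <= t' -> F t' \subset F t) ->
  exists t0, forall t, t0 <= t -> F t = F t0.
Proof.
move=> F_mono.
have stationary_from m t : #|F t| <= m -> exists t0, forall t', t0 <= t' -> F t' = F t0.
  elim: m t => [|m IH] t Ft.
    exists t => t' tt'; apply/eqP; rewrite eqEcard F_mono //.
    by rewrite (leq_trans Ft).
  have [[t' [tt' Ft']]|stable] := classic (exists t', t <= t' /\ F t' != F t).
    apply: (IH t'); rewrite -ltnS (leq_trans _ Ft) // proper_card //.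
    by rewrite properEneq Ft' F_mono.
  exists t => t' tt'; apply/eqP/negPn/negP => Ft'; apply: stable; by exists t'.
exact: stationary_from _ 0 (leqnn _).
Qed.

Section Adversary.
Variables (n : nat) (alg : {set 'I_n * 'I_n} -> {set 'I_n}).
Implicit Types (sigma : {perm 'I_n}) (u v : 'I_n).

Definition order_graph (f : 'I_n -> nat) : {set 'I_n * 'I_n} := [set p | f p.1 < f p.2].

(* [key t v] reads the memberships of [v] in the first [t] interventions as a
   binary number, most significant bit first, when [alg] is shown the orientation
   induced by the current keys at every step. *)
Fixpoint key t : 'I_n -> nat :=
  if t is t'.+1 then fun v => (key t' v).*2 + (v \in alg (order_graph (key t')))
  else fun=> 0.

Definition key_interventions t := [seq alg (order_graph (key i)) | i <- iota 0 t].

Lemma key_interventions_S t :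
  key_interventions t.+1 = rcons (key_interventions t) (alg (order_graph (key t))).
Proof. by rewrite /key_interventions -addn1 iotaD map_cat cats1. Qed.

Lemma separated_key t u v :
  separated (key_interventions t) u v = (key t u != key t v).
Proof.
elim: t => [|t IH] //; rewrite key_interventions_S separated_rcons IH /=.
by rewrite eqn_double_addb negb_and; case: (u \in _) (v \in _) => [] [].
Qed.

Lemma key_lt_mono t t' u v : t <= t' -> key t u < key t v -> key t' u < key t' v.
Proof.
move=> /subnK <-; elim: (t' - t) => [|d IH] // /IH uv; rewrite addSn /=.
by case: (u \in _) (v \in _) => [] [] /=; lia.
Qed.

Lemma key_eq_anti t t' u v : t <= t' -> key t' u = key t' v -> key t u = key t v.
Proof.
by move=> tt' uv; case: (ltngtP (key t u) (key t v)) => // /(key_lt_mono tt'); rewrite uv ltnn.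
Qed.

(* Equality of keys only gets finer with time, so it is eventually constant, and
   the order of the keys from then on extends the order of the keys at any time. *)
Lemma key_compatible_perm :
  exists sigma, forall t u v, key t u < key t v -> before sigma u v.
Proof.
pose tied t := [set p : 'I_n * 'I_n | key t p.1 == key t p.2].
have [t0 stable] : exists t0, forall t, t0 <= t -> tied t = tied t0.
  apply: nonincreasing_sets_stationary => t t' tt'; apply/subsetP => p.
  by rewrite !inE => /eqP/(key_eq_anti tt') ->.
have [sigma sigma_key] := exists_perm_monotone (key t0).
exists sigma => t u v uv; apply: sigma_key.
have [tt0|t0t] := leqP t t0; first exact: key_lt_mono uv.
have : key t0 u != key t0 v.
  apply: contraTneq uv => eq0; move/setP/(_ (u, v)): (stable t (ltnW t0t)).
  by rewrite !inE /= eq0 eqxx => /eqP ->; rewrite ltnn.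
by case: (ltngtP (key t0 u) (key t0 v)) => // /(key_lt_mono (ltnW t0t)); rewrite ltnNge ltnW.
Qed.

Lemma learned_key sigma t : (forall u v, key t u < key t v -> before sigma u v) ->
  learned sigma (key_interventions t) = order_graph (key t).
Proof.
move=> compat; apply/setP => -[a b]; rewrite !inE /=; apply/idP/idP; last first.
  move=> ab; have sigma_ab := compat _ _ ab; rewrite sigma_ab; apply/existsP; exists b.
  by rewrite leqnn (ltnW sigma_ab) separated_key neq_ltn ab.
move=> /andP[_ /existsP[c /andP[/andP[ac cb] sac]]].
have key_le x y : sigma x <= sigma y -> key t x <= key t y.
  by move=> xy; rewrite leqNgt; apply: contraL xy => /compat; rewrite /before -ltnNge.
apply: (@leq_trans (key t c)); last exact: key_le.
by rewrite ltn_neqAle -separated_key sac key_le.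
Qed.

Lemma adaptive_run sigma : (forall t u v, key t u < key t v -> before sigma u v) ->
  forall m, adaptive_used alg sigma m = key_interventions m.
Proof.
move=> compat; elim=> [|m IH] //.
by rewrite adaptive_used_S key_interventions_S adaptive_stateE IH (learned_key (compat m)).
Qed.

Lemma adaptive_adversary : exists sigma, forall m,
  fully_oriented (adaptive_state alg sigma m) ->
  separating (adaptive_used alg sigma m) [set: 'I_n].
Proof.
have [sigma compat] := key_compatible_perm; exists sigma => m.
rewrite adaptive_stateE (adaptive_run compat) (learned_key (compat m)) => /forallP full.
move=> u v _ _ uv; rewrite separated_key neq_ltn.
by move/forallP/(_ v): (full u); rewrite uv !inE.
Qed.
End Adversary.

Section EntropyGain.
Local Open Scope R_scope.

Definition xlnx (x : R) : R := x * ln x.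

(* [N] times the binary entropy, in nats, of the fraction [t / N]. *)
Definition entropy_gain (t N : R) : R := xlnx N - xlnx t - xlnx (N - t).

Lemma mul_ln_ratio_le x y : 0 <= x -> 0 < y -> x * (ln y - ln x) <= y - x.
Proof.
move=> x_ge0 y_gt0; have [x_gt0|<-] := Rle_lt_or_eq_dec _ _ x_ge0; last lra.
have := exp_ineq1_le (ln (y / x)).
rewrite (exp_ln _ (Rdiv_lt_0_compat _ _ y_gt0 x_gt0)) /Rdiv.
rewrite (ln_mult _ _ y_gt0 (Rinv_0_lt_compat _ x_gt0)) (ln_Rinv _ x_gt0).
move=> /(Rmult_le_compat_l x _ _ x_ge0).
have -> : x * (y * / x) = y by field; lra.
lra.
Qed.

Lemma gibbs_term x p q N : 0 <= x -> x <= p -> x <= q -> 0 < N ->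
  x * (ln p + ln q - ln N - ln x) <= p * q / N - x.
Proof.
move=> x_ge0 xp xq N_gt0; have [x_gt0|<-] := Rle_lt_or_eq_dec _ _ x_ge0; last first.
  have : 0 <= p * q / N by apply: Rmult_le_pos; [nra | apply/Rlt_le/Rinv_0_lt_compat].
  lra.
have pqN : 0 < p * q / N by apply: Rdiv_lt_0_compat => //; nra.
have := mul_ln_ratio_le x_ge0 pqN.
by rewrite /Rdiv ln_mult ?ln_mult ?ln_Rinv //; try nra; apply: Rinv_0_lt_compat.
Qed.

Lemma entropy_gain_superadditive x X y Y : 0 <= x <= X -> 0 <= y <= Y ->
  entropy_gain x X + entropy_gain y Y <= entropy_gain (x + y) (X + Y).
Proof.
move=> [x_ge0 xX] [y_ge0 yY].
have [N_gt0|N0] := Rle_lt_or_eq_dec 0 (X + Y) ltac:(lra); last first.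
  have [-> ->] : X = 0 /\ Y = 0 by lra.
  have [-> ->] : x = 0 /\ y = 0 by lra.
  rewrite /entropy_gain /xlnx; lra.
(* Gibbs' inequality on the cells of the table with rows (x, X - x), (y, Y - y). *)
have g1 := @gibbs_term x X (x + y) (X + Y) x_ge0 xX ltac:(lra) N_gt0.
have g2 := @gibbs_term (X - x) X (X + Y - (x + y)) (X + Y)
  ltac:(lra) ltac:(lra) ltac:(lra) N_gt0.
have g3 := @gibbs_term y Y (x + y) (X + Y) y_ge0 yY ltac:(lra) N_gt0.
have g4 := @gibbs_term (Y - y) Y (X + Y - (x + y)) (X + Y)
  ltac:(lra) ltac:(lra) ltac:(lra) N_gt0.
have margins : X * (x + y) / (X + Y) + X * (X + Y - (x + y)) / (X + Y)
  + Y * (x + y) / (X + Y) + Y * (X + Y - (x + y)) / (X + Y) = X + Y.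
  by field; lra.
rewrite /entropy_gain /xlnx; lra.
Qed.

Lemma entropy_gain_le t k N : 0 <= t <= k -> k <= N -> 0 < k ->
  entropy_gain t N <= k * (1 + ln N - ln k).
Proof.
move=> [t_ge0 tk] kN k_gt0.
have lnkN : ln k <= ln N.
  by have [/(ln_increasing _ _ k_gt0)/Rlt_le|->] := Rle_lt_or_eq_dec _ _ kN; lra.
have := @mul_ln_ratio_le (N - t) N ltac:(lra) ltac:(lra).
have := mul_ln_ratio_le t_ge0 k_gt0.
have : (k - t) * ln k <= (k - t) * ln N by apply: Rmult_le_compat_l; lra.
rewrite /entropy_gain /xlnx; lra.
Qed.
Lemma lower_bound_le n k (m : R) : (0 < k <= n)%N ->
  xlnx (INR n) <= m * (INR k * (1 + ln (INR n) - ln (INR k))) ->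
  lower_bound n k <= m.
Proof.
move=> /andP[/ltP/lt_0_INR k_gt0 /leP/le_INR kn] bound.
have n_gt0 : 0 < INR n by lra.
have lnkn : ln (INR k) <= ln (INR n).
  by have [/(ln_increasing _ _ k_gt0)/Rlt_le|->] := Rle_lt_or_eq_dec _ _ kn; lra.
have lnE : ln (INR n * exp 1 / INR k) = 1 + ln (INR n) - ln (INR k).
  rewrite /Rdiv (ln_mult _ _ (Rmult_lt_0_compat _ _ n_gt0 (exp_pos 1)) (Rinv_0_lt_compat _ k_gt0)).
  by rewrite (ln_mult _ _ n_gt0 (exp_pos 1)) ln_exp (ln_Rinv _ k_gt0); ring.
rewrite /lower_bound lnE.
apply: (Rmult_le_reg_r (INR k * (1 + ln (INR n) - ln (INR k)))); first nra.
rewrite /xlnx in bound.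
have -> : INR n / INR k * (ln (INR n) / (1 + ln (INR n) - ln (INR k))) *
  (INR k * (1 + ln (INR n) - ln (INR k))) = INR n * ln (INR n) by field; lra.
lra.
Qed.

Lemma bigRplus_le_size_mul (I : eqType) (r : seq I) (F : I -> R) (c : R) :
  (forall i, i \in r -> F i <= c) -> \big[Rplus/0]_(i <- r) F i <= INR (size r) * c.
Proof.
elim: r => [|i r IH] Fc; first by rewrite big_nil /=; lra.
rewrite big_cons (S_INR (size r)).
have := Fc i (mem_head i r).
have := IH (fun j rj => Fc j (mem_behead (s := i :: r) rj)); lra.
Qed.
End EntropyGain.

Section SeparationEntropy.
Variable T : finType.
Implicit Types (s : seq {set T}) (V : {set T}).
Local Open Scope R_scope.

Definition separation_entropy s V : R :=
  \big[Rplus/0]_(I <- s) entropy_gain (INR #|I :&: V|) (INR #|V|).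

Lemma separation_entropy_split s V I :
  separation_entropy s (V :&: I) + separation_entropy s (V :\: I) <= separation_entropy s V.
Proof.
apply: (big_ind3 (fun a b c => a + b <= c)) => [|? ? ? ? ? ? ? ?|J _]; try lra.
have cardV : #|V| = (#|V :&: I| + #|V :\: I|)%N by rewrite cardsID.
have cardJ : #|J :&: V| = (#|J :&: (V :&: I)| + #|J :&: (V :\: I)|)%N.
  by rewrite setIA setIDA cardsID.
rewrite cardV cardJ !plus_INR; apply: entropy_gain_superadditive;
  by split; [exact: pos_INR | apply/le_INR/leP/subset_leq_card/subsetIr].
Qed.

Lemma xlnx_card_le_separation_entropy s V :
  separating s V -> xlnx (INR #|V|) <= separation_entropy s V.
Proof.
elim: s V => [|I s IH] V sepV.
  rewrite /separation_entropy big_nil.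
  by case: #|V| (separating_nil sepV) => [|[|]] // _; rewrite /xlnx /= ?ln_1; lra.
have [sepVI sepVD] := separating_cons sepV.
have -> : separation_entropy (I :: s) V =
    entropy_gain (INR #|I :&: V|) (INR #|V|) + separation_entropy s V.
  by rewrite /separation_entropy big_cons.
have -> : entropy_gain (INR #|I :&: V|) (INR #|V|) =
    xlnx (INR #|V|) - xlnx (INR #|V :&: I|) - xlnx (INR #|V :\: I|).
  by rewrite /entropy_gain setIC -(cardsID I V) plus_INR; congr (_ - _ - xlnx _); ring.
have := separation_entropy_split s V I; have := IH _ sepVI; have := IH _ sepVD.
lra.
Qed.

Lemma separating_size_ge s (k : nat) : (0 < k <= #|T|)%N ->
  (forall I, I \in s -> #|I| <= k)%N -> separating s [set: T] ->
  lower_bound #|T| k <= INR (size (undup s)).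
Proof.
move=> /andP[k_gt0 kT] small sep_s; apply: lower_bound_le; first by rewrite k_gt0.
have := xlnx_card_le_separation_entropy (separating_undup sep_s).
rewrite /separation_entropy cardsT => /Rle_trans; apply.
apply: bigRplus_le_size_mul => I; rewrite mem_undup setIT => sI.
apply: entropy_gain_le; [split; [exact: pos_INR | exact/le_INR/leP/small] | | ].
- exact/le_INR/leP.
- exact/lt_0_INR/ltP.
Qed.
End SeparationEntropy.

Section DigitFamily.
Variables (n b k : nat).
Hypotheses (b_gt1 : 1 < b) (n_le_bk : n <= b * k).
Let b_gt0 : 0 < b := ltnW b_gt1.

Lemma exists_digit_neq L u v : u < b ^ L -> v < b ^ L -> u != v ->
  exists2 i, i < L & u %/ b ^ i %% b != v %/ b ^ i %% b.
Proof.
elim: L u v => [|L IH] u v.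
  by rewrite expn0 !ltnS !leqn0 => /eqP -> /eqP ->; rewrite eqxx.
have div_lt w : w < b ^ L.+1 -> w %/ b < b ^ L by rewrite ltn_divLR // -expnSr.
move=> ubL vbL uv; have [last_digit|] := eqVneq (u %% b) (v %% b); last first.
  by exists 0; rewrite // expn0 !divn1.
have high_neq : u %/ b != v %/ b.
  by apply: contra uv => /eqP eq_div; rewrite (divn_eq u b) (divn_eq v b) eq_div last_digit.
have [i iL digit_i] := IH _ _ (div_lt _ ubL) (div_lt _ vbL) high_neq.
by exists i.+1; rewrite // expnS !divnMA.
Qed.

(* Digit [i] of [v], shifted by the last digit [v %% b] when [i > 0]: [v] is then
   determined by [v %/ b] and [digit_key i v], so each class has at most [k] vertices. *)
Definition digit_key (i v : nat) : nat :=
  if i is 0 then v %% b else (v %/ b ^ i + v) %% b.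

Definition digit_class (i d : nat) : {set 'I_n} := [set v : 'I_n | digit_key i v == d].

Lemma card_digit_class i d : #|digit_class i d| <= k.
Proof.
have div_lt (v : 'I_n) : v %/ b < k.
  by rewrite ltn_divLR // mulnC (leq_trans (ltn_ord v)).
rewrite -[k in _ <= k]card_ord -(card_in_imset (f := fun v => Ordinal (div_lt v))).
  exact: max_card.
move=> u v; rewrite !inE => /eqP ud /eqP vd /(congr1 val) /= uv.
have last_digit : u %% b = v %% b.
  case: i ud vd => [|i] /=; first by move=> -> ->.
  rewrite expnS !divnMA uv => ud vd.
  by apply/eqP; rewrite -(eqn_modDl (v %/ b %/ b ^ i)) ud vd.
by apply: val_inj; rewrite /= (divn_eq u b) (divn_eq v b) uv last_digit.
Qed.

Definition digit_family L : seq {set 'I_n} :=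
  [seq digit_class i d | i <- iota 0 L, d <- iota 1 b.-1].

Lemma size_digit_family L : size (digit_family L) = L * b.-1.
Proof. by rewrite size_allpairs !size_iota. Qed.

Lemma separating_digit_family L : n <= b ^ L -> separating (digit_family L) [set: 'I_n].
Proof.
move=> n_le_bL u v _ _ uv.
have [i iL digit_i] := exists_digit_neq (leq_trans (ltn_ord u) n_le_bL)
  (leq_trans (ltn_ord v) n_le_bL) uv.
have [j [jL key_j]] : exists j, j < L /\ digit_key j u != digit_key j v.
  have [last_digit|] := eqVneq (u %% b) (v %% b); last by exists 0; rewrite (leq_ltn_trans _ iL).
  exists i; split => //; case: i iL digit_i => [|i] _ /=; first by rewrite !expn0 !divn1.
  apply: contra => /eqP key_eq; rewrite -(eqn_modDr u) key_eq.
  by rewrite -modnDmr -[X in _ == X]modnDmr last_digit.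
have key_lt w : digit_key j w < b by case: j {jL key_j} => [|j]; apply: ltn_pmod.
pose d := if digit_key j u != 0 then digit_key j u else digit_key j v.
have d_gt0 : 0 < d.
  by rewrite /d; case: ifP; rewrite lt0n // => /negbFE/eqP u0; rewrite -u0 eq_sym.
apply/hasP; exists (digit_class j d).
  apply: allpairs_f; rewrite mem_iota // add1n prednK ?(ltnW b_gt1) // d_gt0.
  by rewrite /= /d; case: ifP => _; apply: key_lt.
rewrite !inE /d; case: ifP => _; last by rewrite eqxx (negbTE key_j).
by rewrite eqxx [_ == digit_key j u]eq_sym (negbTE key_j).
Qed.
End DigitFamily.

Lemma leq_ceil_div n k : 0 < k -> n <= ceil_div n k * k.
Proof.
move=> k_gt0; rewrite /ceil_div.
have := divn_eq (n + k.-1) k; have := ltn_pmod (n + k.-1) k_gt0; lia.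
Qed.

Lemma ceil_div_gt1 n k : 0 < k < n -> 1 < ceil_div n k.
Proof. by case/andP=> k_gt0 kn; rewrite /ceil_div leq_divRL //; lia. Qed.

Theorem theorem3 (n k : nat) (hk : (0 < k)%N) (hkn : (k.*2 < n)%N) :
  (* lower bound, non-adaptive algorithms *)
  (forall s : seq {set 'I_n},
      (forall I, I \in s -> (#|I| <= k)%N) ->
      (forall sigma : {perm 'I_n}, fully_oriented (nonadaptive_state sigma s)) ->
      Rle (lower_bound n k) (INR (size (undup s)))) /\
  (* lower bound, adaptive deterministic algorithms *)
  (forall alg : {set 'I_n * 'I_n} -> {set 'I_n},
      (forall (sigma : {perm 'I_n}) (i : nat), (#|alg (adaptive_state alg sigma i)| <= k)%N) ->
      (forall sigma : {perm 'I_n}, exists m, fully_oriented (adaptive_state alg sigma m)) ->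
      exists sigma : {perm 'I_n}, forall m,
        fully_oriented (adaptive_state alg sigma m) ->
        Rle (lower_bound n k) (INR (size (undup (adaptive_used alg sigma m))))) /\
  (* upper bound *)
  (exists s : seq {set 'I_n},
      (forall I, I \in s -> (#|I| <= k)%N) /\
      (size s <= upper_bound n k)%N /\
      (forall sigma : {perm 'I_n}, fully_oriented (nonadaptive_state sigma s))).
Proof.
have k_bounds : (0 < k <= #|'I_n|)%N by rewrite card_ord hk; lia.
split; [|split].
- move=> s small full; rewrite -[n in lower_bound n]card_ord.
  exact: separating_size_ge small (separating_of_fully_oriented full).
- move=> alg small _; have [sigma adversary] := adaptive_adversary alg.
  exists sigma => m /adversary sep_m; rewrite -[n in lower_bound n]card_ord.
  by apply: separating_size_ge sep_m => // I /mapP[i _ ->].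
- have b_gt1 : (1 < ceil_div n k)%N by apply: ceil_div_gt1; rewrite hk; lia.
  exists (digit_family n (ceil_div n k) (up_log (ceil_div n k) n)); split; [|split].
  + move=> I /allpairsP[[i d] [_ _ ->]].
    exact: card_digit_class b_gt1 (leq_ceil_div n hk) i d.
  + by rewrite size_digit_family mulnC.
  + move=> sigma; rewrite nonadaptive_stateE; apply: fully_oriented_learned.
    exact: (separating_digit_family b_gt1 (up_logP n b_gt1)).
Qed.
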